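(* Let $n\ge3$ and consider the cycle graph $C_n$. For $i\in[n]$ let $\mathrm{Inc}_i^n:=i(i+1)\cdots n\,12\cdots(i-1)$. (1) If $i\ge4$, then for every $j\in[n]$: $B(j,\mathrm{Inc}_i^n,C_n)=i(i+1)\cdots j$ if $j\ge i$; $=n\,12\cdots j$ if $3\le j\le i-1$; $=12$ if $j=2$; $=1$ if $j=1$. Consequently the number of $C_n$-friendship parking functions with outcome $\mathrm{Inc}_i^n$ is $(n-i+1)!\,i!/3$. (2) If $i\le3$, then for every $j\in[n]$: $B(j,\mathrm{Inc}_i^n,C_n)=i\cdots j$ if $j\ge i$, and $=1\cdots j$ if $j\le i-1$. Consequently the number of $C_n$-friendship parking functions with outcome $\mathrm{Inc}_i^n$ is $(n+1-i)!\,(i-1)!$.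
   Context: $C_n$ ($n\ge3$) is the cycle graph with vertex set $[n]$ and edges $\{i,i+1\}$ for $i\in[n-1]$ and $\{n,1\}$. Permutations are in one-line notation. Friendship parking process for a graph $G$ on $[n]$ and a parking preference $p\in[n]^n$: cars $1,\dots,n$ enter in order into spots $1,\dots,n$ (initially empty); spot $k$ is available for car $i$ if it is unoccupied when $i$ enters and each of spots $k-1,k+1$ is unoccupied or occupied by a car adjacent to $i$ in $G$ (spots $0,n+1$ count as unoccupied); car $i$ parks in the first available spot $k\ge p_i$, failing otherwise. $p$ is a $G$-friendship parking function if all cars park; its outcome is the permutation $\pi$ with $\pi_k$ the car in spot $k$ at the end. Blockers: for a permutation $\pi$ that is a Hamiltonian path of $G$ (i.e. $\{\pi_k,\pi_{k+1}\}$ is an edge for all $k$) and $i\in[n]$, $j=\pi_k$ is a blocker for $i$ if (1) $j\le i$, or (2) $j>i$ and some $\ell\in\{\pi_{k-1},\pi_{k+1}\}$ satisfies $\ell<i$ and $\ell$ not adjacent to $i$ in $G$. The blocking sequence $B(i,\pi,G)$ is the longest contiguous block of $\pi$ ending at $i$ consisting of blockers for $i$. *)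

(* Vertices, cars and spots are the naturals 1..n;
   permutations / parking preferences are sequences (one-line notation). *)
From mathcomp Require Import all_boot.
Set Implicit Arguments.
Unset Strict Implicit.
Unset Printing Implicit Defensive.

Definition cycle_adj (n : nat) : rel nat := fun a b =>
  [&& 1 <= a <= n, 1 <= b <= n &
   [|| b == a.+1, a == b.+1, (a == n) && (b == 1) | (a == 1) && (b == n)]].

(* Contents of spot k (spots 1..n) in the parking lot s (s`_(k-1) is spot k);
   0 means unoccupied; spots 0 and n+1 are always unoccupied. *)
Definition occ (s : seq nat) (k : nat) : nat :=
  if k is k'.+1 then nth 0 s k' else 0.

Definition available (G : rel nat) (s : seq nat) (i k : nat) : bool :=
  [&& occ s k == 0,
      (occ s k.-1 == 0) || G (occ s k.-1) i &
      (occ s k.+1 == 0) || G (occ s k.+1) i].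

Definition first_avail (G : rel nat) (n : nat) (s : seq nat) (i a : nat)
  : option nat :=
  ohead [seq k <- iota a (n.+1 - a) | available G s i k].

(* Friendship parking process: cars 1..n enter in order; car i prefers p_i
   (= p`_(i-1)).  Returns Some (final lot) if all cars park, None otherwise. *)
Definition fpark (G : rel nat) (n : nat) (p : seq nat) : option (seq nat) :=
  foldl (fun (st : option (seq nat)) (i : nat) =>
           match st with
           | None => None
           | Some s =>
               match first_avail G n s i (nth 0 p i.-1) with
               | None => None
               | Some k => Some (set_nth 0 s k.-1 i)
               end
           end)
        (Some (nseq n 0)) (iota 1 n).

Fixpoint words (m : nat) (A : seq nat) : seq (seq nat) :=
  if m is m'.+1 then [seq x :: w | x <- A, w <- words m' A] else [:: [::]].

Definition prefs (n : nat) : seq (seq nat) := words n (iota 1 n).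

Definition num_fpf_outcome (G : rel nat) (n : nat) (pi : seq nat) : nat :=
  count (fun p => fpark G n p == Some pi) (prefs n).

(* Blockers: the entry at (0-based) position t of pi is a blocker for i. *)
Definition nbrs (pi : seq nat) (t : nat) : seq nat :=
  (if 0 < t then [:: nth 0 pi t.-1] else [::]) ++
  (if t.+1 < size pi then [:: nth 0 pi t.+1] else [::]).

Definition blocker (G : rel nat) (pi : seq nat) (i t : nat) : bool :=
  let j := nth 0 pi t in
  (j <= i) || ((i < j) && has (fun l => (l < i) && ~~ G l i) (nbrs pi t)).

(* Blocking sequence B(i, pi, G): the longest contiguous block of pi ending at
   i all of whose entries are blockers for i. *)
Definition blocking_seq (i : nat) (pi : seq nat) (G : rel nat) : seq nat :=
  let t := index i pi in
  let r := find (fun d => ~~ blocker G pi i (t - d)) (iota 0 t.+1) in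
  drop (t.+1 - r) (take t.+1 pi).

Definition Inc (n i : nat) : seq nat := iota i (n.+1 - i) ++ iota 1 i.-1.

(* Let pi be a Hamiltonian path of G and suppose cars 1..m already occupy their
   spots in pi. For car m+1, every spot left of its pi-spot is unavailable exactly
   when the entry of pi there is a blocker: a smaller entry is a parked car, and a
   larger one is an empty spot whose parked neighbours (the smaller ones) must all
   be adjacent to m+1. The pi-spot itself is available, its parked neighbours being
   its neighbours on the path. So car m+1 keeps pi's pattern iff its preference lies
   among the spots of B(m+1, pi, G), while a car parked off pi is never displaced.
   Hence the G-parking functions with outcome pi number prod_j |B(j, pi, G)|. For
   Inc_i^n on C_n the blocking sequences are read off directly; for 3 <= j < i the
   entry n blocks j because its neighbour 1 is not adjacent to j, so |B(j)| = j+1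
   there and the cars below i contribute 1*2*4*5*...*i = i!/3. *)

From mathcomp Require Import all_boot zify.

Lemma ohead_filter_iotaP (P : pred nat) a len x :
  ohead [seq k <- iota a len | P k] = Some x <->
  [/\ a <= x < a + len, P x & forall y, a <= y < x -> ~~ P y].
Proof.
elim: len a => [|len IH] a /=; first by split=> // -[]; lia.
case: ifP => Pa /=.
- split=> [[<-]|[hx Px hbefore]]; first by split=> //; [lia | move=> y; lia].
  case: (x =P a) => [->//|ne]; have := hbefore a; rewrite Pa; lia.
- rewrite IH; split=> -[hx Px hbefore]; split=> //; try lia.
  + by move=> y hy; case: (y =P a) => [->|ne]; [rewrite Pa | apply: hbefore; lia].
  + by case: (x =P a) => [e|ne]; [move: Pa; rewrite -e Px | lia].
  + by move=> y hy; apply: hbefore; lia.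
Qed.

Lemma find_iota_eq (a : pred nat) m N r : r <= N ->
  (forall d, d < r -> ~~ a (m + d)) -> (r < N -> a (m + r)) ->
  find a (iota m N) = r.
Proof.
elim: N m r => [|N IH] m [|r] //= hr hbefore hat; try lia.
- by rewrite -{1}(addn0 m) hat.
- have := hbefore 0 isT; rewrite addn0 => /negbTE ->; congr S.
  apply: IH => [|d hd|hrN]; rewrite ?addSnnS; [lia | apply: hbefore | apply: hat]; lia.
Qed.

Lemma map_nth_iota (f : nat -> nat) a c L :
  (forall k, k < L -> f (a + k) = c + k) -> [seq f x | x <- iota a L] = iota c L.
Proof.
elim: L a c => [|L IH] a c //= h; congr cons; first by have := h 0 isT; rewrite !addn0.
by apply: IH => k hk; rewrite !addSnnS; apply: h; lia.
Qed.

Lemma drop_take_iota (s : seq nat) a b : b <= size s ->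
  drop a (take b s) = [seq nth 0 s k | k <- iota a (b - a)].
Proof.
move=> hb; apply: (@eq_from_nth _ 0) => [|k].
  by rewrite size_drop size_takel // size_map size_iota.
rewrite size_drop size_takel // => hk.
by rewrite nth_drop nth_take ?(nth_map 0) ?size_iota ?nth_iota //; lia.
Qed.

Lemma iotaSr k m : iota k m.+1 = rcons (iota k m) (k + m).
Proof. by rewrite -cats1 -addn1 iotaD. Qed.

Lemma words_sizeP m (A : seq nat) p :
  p \in words m A -> size p = m /\ all (mem A) p.
Proof.
elim: m p => [|m IH] p /=; first by rewrite inE => /eqP ->.
case/allpairsP => -[x w] /= [hx /IH[hw hwA] ->].
by rewrite /= hw hx hwA.
Qed.

Lemma count_words m (A : seq nat) (P : nat -> pred nat) :
  count (fun w => all (fun k => P k (nth 0 w k)) (iota 0 m)) (words m A) =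
  \prod_(0 <= k < m) count (P k) A.
Proof.
elim: m P => [|m IH] P; first by rewrite big_geq.
rewrite big_nat_recl // -(IH (fun k => P k.+1)) /= count_flatten -map_comp.
set c := count _ (words m A).
rewrite (eq_map (g := fun x => P 0 x * c)) => [|x /=].
  by elim: (A) => //= x s ->; rewrite mulnDl.
rewrite count_map; case: (boolP (P 0 x)) => hx /=.
- by rewrite mul1n; apply: eq_count => w /=; rewrite hx -addn1 addnC iotaDl all_map.
- by rewrite mul0n; apply/eqP; rewrite -leqn0 leqNgt -has_count;
    apply/hasPn => w _ /=; rewrite (negbTE hx).
Qed.
Lemma count_iota_window n L U : U <= n ->
  count (fun a => L < a <= U) (iota 1 n) = U - L.
Proof.
elim: n U => [|n IH] U hU; first by have -> : U = 0 by lia.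
rewrite iotaSr -cats1 count_cat /= addn0 add1n.
case: (ltnP U n.+1) => hUn; first by rewrite IH ?andbF ?addn0 //; lia.
have -> : U = n.+1 by lia.
rewrite (eq_in_count (a2 := fun a => L < a <= n)); last first.
  by move=> a; rewrite mem_iota => ha; apply/idP/idP => /andP[-> _]; lia.
rewrite IH //; case: ltnP; lia.
Qed.

Definition ham_path (n : nat) (G : rel nat) (pi : seq nat) : Prop :=
  [/\ size pi = n, uniq pi, {in pi, forall x, 0 < x <= n},
      (forall j, 0 < j <= n -> j \in pi) &
      (forall q, q.+1 < n -> G (nth 0 pi q) (nth 0 pi q.+1) && G (nth 0 pi q.+1) (nth 0 pi q))].

Definition blocking_len (G : rel nat) (pi : seq nat) (j : nat) : nat :=
  find (fun d => ~~ blocker G pi j (index j pi - d)) (iota 0 (index j pi).+1).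

(* [a] is one of the spots (numbered from 1) occupied by the blocking sequence of [j]. *)
Definition blocking_window (G : rel nat) (pi : seq nat) (j a : nat) : bool :=
  (index j pi).+1 - blocking_len G pi j < a <= (index j pi).+1.

Lemma blocking_len_le G pi j : blocking_len G pi j <= (index j pi).+1.
Proof. by rewrite -[X in _ <= X](size_iota 0) find_size. Qed.

Lemma blocker_before_blocking_len G pi j d :
  d < blocking_len G pi j -> blocker G pi j (index j pi - d).
Proof.
move=> hd; have := before_find 0 hd.
rewrite nth_iota; last by have := blocking_len_le G pi j; lia.
by rewrite add0n => /negbFE.
Qed.

Lemma nonblocker_at_blocking_len G pi j :
  blocking_len G pi j < (index j pi).+1 ->
  ~~ blocker G pi j (index j pi - blocking_len G pi j).
Proof.
move=> h; have hhas : has (fun d => ~~ blocker G pi j (index j pi - d)) (iota 0 (index j pi).+1).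
  by rewrite has_find size_iota.
by have := nth_find 0 hhas; rewrite nth_iota // add0n.
Qed.

Lemma blocking_lenE G pi j r : r <= (index j pi).+1 ->
  (forall d, d < r -> blocker G pi j (index j pi - d)) ->
  (r < (index j pi).+1 -> ~~ blocker G pi j (index j pi - r)) ->
  blocking_len G pi j = r.
Proof.
move=> hr hbefore hat; apply: find_iota_eq => //.
by move=> d hd; rewrite add0n negbK; apply: hbefore.
Qed.

Lemma blocking_seqE G pi j : index j pi < size pi ->
  blocking_seq j pi G =
  [seq nth 0 pi k | k <- iota ((index j pi).+1 - blocking_len G pi j) (blocking_len G pi j)].
Proof.
move=> hj; rewrite /blocking_seq -/(blocking_len G pi j) drop_take_iota //.
have := blocking_len_le G pi j; set r := blocking_len G pi j => hr.
by have -> : (index j pi).+1 - ((index j pi).+1 - r) = r by lia.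
Qed.

Lemma size_blocking_seq G pi j : index j pi < size pi ->
  size (blocking_seq j pi G) = blocking_len G pi j.
Proof. by move=> hj; rewrite blocking_seqE // size_map size_iota. Qed.

Lemma blocker_le G pi j q : nth 0 pi q <= j -> blocker G pi j q.
Proof. by rewrite /blocker => ->. Qed.

Lemma blocking_len_gt0 G pi j : j \in pi -> 0 < blocking_len G pi j.
Proof.
move=> hj; rewrite lt0n; apply/eqP => h0.
have := nonblocker_at_blocking_len G pi j; rewrite h0 subn0 => /(_ isT).
by rewrite blocker_le ?nth_index.
Qed.

(* The lot after cars [1..m] have parked where [pi] puts them. *)
Definition upto (m x : nat) : nat := if x <= m then x else 0.
Definition lot_upto (m : nat) (pi : seq nat) : seq nat := map (upto m) pi.

Lemma nth_lot_upto m pi k : nth 0 (lot_upto m pi) k = upto m (nth 0 pi k).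
Proof.
case: (ltnP k (size pi)) => hk; first by rewrite (nth_map 0).
by rewrite !nth_default ?size_map.
Qed.

Lemma occ_lot_upto m pi k : occ (lot_upto m pi) k = upto m (occ pi k).
Proof. by case: k => [|k] //=; rewrite nth_lot_upto. Qed.

Definition park_step (G : rel nat) (n : nat) (p : seq nat)
    (st : option (seq nat)) (i : nat) : option (seq nat) :=
  if st is Some s then
    if first_avail G n s i (nth 0 p i.-1) is Some k then Some (set_nth 0 s k.-1 i)
    else None
  else None.

Lemma fparkE G n p : fpark G n p = foldl (park_step G n p) (Some (nseq n 0)) (iota 1 n).
Proof. by []. Qed.

Definition parks_within (G : rel nat) (pi p : seq nat) (m : nat) : bool :=
  all (fun k => blocking_window G pi k.+1 (nth 0 p k)) (iota 0 m).

(* Occupied spots are never available, so once a car sits off its pi-spot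
   the outcome cannot be pi. *)
Definition misparked (pi : seq nat) (st : option (seq nat)) : Prop :=
  if st is Some s then exists k, nth 0 s k != 0 /\ nth 0 s k != nth 0 pi k else True.

Lemma park_step_misparked G n p pi st i : 0 < nth 0 p i.-1 ->
  misparked pi st -> misparked pi (park_step G n p st i).
Proof.
case: st => [s|] //= hp [k [hk0 hkpi]].
case e: (first_avail G n s i (nth 0 p i.-1)) => [x|] //=.
have [hx /and3P[hx0 _ _] _] := (ohead_filter_iotaP _ _ _ _).1 e.
exists k; rewrite nth_set_nth /=; case: (k =P x.-1) => [ek|_]; last by [].
have hxk : x = k.+1 by lia.
by move: hx0 hk0; rewrite hxk /= => /eqP ->.
Qed.

Section HamiltonianPath.

Variables (n : nat) (G : rel nat) (pi : seq nat).
Hypothesis ham : ham_path n G pi.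

Lemma nth_ham_path_range k : k < n -> 0 < nth 0 pi k <= n.
Proof. by case: ham => hs _ hr _ _ hk; apply: hr; rewrite mem_nth ?hs. Qed.

Lemma nth_ham_path_default k : n <= k -> nth 0 pi k = 0.
Proof. by case: ham => hs _ _ _ _ hk; rewrite nth_default ?hs. Qed.

Lemma index_ham_path_lt j : 0 < j <= n -> index j pi < n.
Proof. by case: ham => hs _ _ ha _ /ha; rewrite -index_mem hs. Qed.

Lemma nth_index_ham_path j : 0 < j <= n -> nth 0 pi (index j pi) = j.
Proof. by case: ham => _ _ _ ha _ /ha /nth_index. Qed.

Lemma index_nth_ham_path k : k < n -> index (nth 0 pi k) pi = k.
Proof. by case: ham => hs hu _ _ _ hk; rewrite index_uniq ?hs. Qed.

Lemma available_own_spot m : m < n ->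
  available G (lot_upto m pi) m.+1 (index m.+1 pi).+1.
Proof.
move=> hm; have ht : index m.+1 pi < n by apply: index_ham_path_lt; lia.
have hjt : nth 0 pi (index m.+1 pi) = m.+1 by apply: nth_index_ham_path; lia.
case: ham => _ _ _ _ hadj.
rewrite /available !occ_lot_upto /= hjt /upto ltnn eqxx /=; apply/andP; split.
- case: (index m.+1 pi) ht hjt => [//|t] ht hjt /=; case: ifP => // _.
  by have := hadj t ht; rewrite hjt => /andP[-> _]; rewrite orbT.
- case: (ltnP (index m.+1 pi).+1 n) => h; last by rewrite nth_ham_path_default.
  case: ifP => // _; have := hadj _ h; rewrite hjt => /andP[_ ->]; by rewrite orbT.
Qed.

Lemma available_before_own_spot m q : m < n -> q < index m.+1 pi ->
  available G (lot_upto m pi) m.+1 q.+1 = ~~ blocker G pi m.+1 q.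
Proof.
move=> hm hq; have ht : index m.+1 pi < n by apply: index_ham_path_lt; lia.
have hqn : q < n by lia.
have hq_ne : nth 0 pi q != m.+1.
  by apply/eqP => e; move: hq; rewrite -e index_nth_ham_path // ltnn.
have hnbr : forall l, l \in nbrs pi q -> 0 < l <= n.
  move=> l; rewrite /nbrs mem_cat => /orP[]; case: ifP => // hlt; rewrite inE => /eqP ->.
  - by apply: nth_ham_path_range; lia.
  - by apply: nth_ham_path_range; case: ham => hs _ _ _ _; rewrite -hs.
have hocc : forall l, l \in nbrs pi q ->
    ((upto m l == 0) || G (upto m l) m.+1) = ~~ ((l < m.+1) && ~~ G l m.+1).
  move=> l /hnbr hl; rewrite /upto; case: ifP => hlm; last by rewrite eqxx; lia.
  have -> : (l == 0) = false by lia.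
  by rewrite ltnS hlm /= negbK.
rewrite /available !occ_lot_upto /= {1}/upto /blocker.
case: (leqP (nth 0 pi q) m) => hle /=; first by have := nth_ham_path_range q hqn; lia.
have hgt : m.+1 < nth 0 pi q by lia.
rewrite leqNgt hgt /= -all_predC.
have hsz : size pi = n by case: ham.
case: q hq hqn hq_ne hnbr hocc {hle hgt} => [|q] hq hqn hq_ne hnbr hocc /=.
- rewrite /nbrs /= hsz; case: ifP => h1 /=.
  + by rewrite -hocc ?andbT // /nbrs hsz h1 inE.
  + by rewrite nth_ham_path_default //; lia.
- rewrite /nbrs /= hsz -hocc; last by rewrite /nbrs mem_cat inE eqxx.
  case: ifP => h1 /=; first by rewrite -hocc ?andbT // /nbrs hsz mem_cat h1 !inE eqxx orbT.
  by rewrite nth_ham_path_default ?andbT //; lia.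
Qed.

Lemma first_avail_own_spotP m a : m < n -> 0 < a <= n ->
  first_avail G n (lot_upto m pi) m.+1 a = Some (index m.+1 pi).+1 <->
  blocking_window G pi m.+1 a.
Proof.
move=> hm ha; have ht : index m.+1 pi < n by apply: index_ham_path_lt; lia.
have hr0 : 0 < blocking_len G pi m.+1.
  by apply: blocking_len_gt0; case: ham => _ _ _ hall _; apply: hall; lia.
have hr := blocking_len_le G pi m.+1.
rewrite /first_avail ohead_filter_iotaP /blocking_window.
split=> [[hx _ hbefore]|/andP[ha1 ha2]].
- apply/andP; split; last lia; rewrite ltnNge; apply/negP => hle.
  have hlt : blocking_len G pi m.+1 < (index m.+1 pi).+1.
    by rewrite ltn_neqAle hr andbT; apply/eqP => e; move: hle ha; rewrite e; lia.
  have /negP := hbefore (index m.+1 pi - blocking_len G pi m.+1).+1 ltac:(lia).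
  by rewrite available_before_own_spot ?nonblocker_at_blocking_len //; lia.
- split; [lia | exact: available_own_spot |] => -[|q] hq; first lia.
  rewrite available_before_own_spot ?negbK //; last lia.
  have := blocker_before_blocking_len G pi m.+1 (index m.+1 pi - q) ltac:(lia).
  by have -> : index m.+1 pi - (index m.+1 pi - q) = q by lia.
Qed.

Lemma lot_upto_succ m : m < n ->
  set_nth 0 (lot_upto m pi) (index m.+1 pi) m.+1 = lot_upto m.+1 pi.
Proof.
move=> hm; have hsz : size pi = n by case: ham.
have ht : index m.+1 pi < n by apply: index_ham_path_lt; lia.
apply: (@eq_from_nth _ 0) => [|k _]; first by rewrite size_set_nth !size_map hsz; lia.
rewrite nth_set_nth /= !nth_lot_upto /upto.
case: (k =P index m.+1 pi) => [->|hk]; first by rewrite nth_index_ham_path ?leqnn //; lia.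
case: (ltnP k n) => hkn; last by rewrite nth_ham_path_default.
have : nth 0 pi k != m.+1.
  by apply/eqP => e; apply: hk; rewrite -e index_nth_ham_path.
by case: ifP => h1; case: ifP => h2; lia.
Qed.

Lemma park_step_within p m : m < n -> blocking_window G pi m.+1 (nth 0 p m) ->
  park_step G n p (Some (lot_upto m pi)) m.+1 = Some (lot_upto m.+1 pi).
Proof.
move=> hm hw; have ht : index m.+1 pi < n by apply: index_ham_path_lt; lia.
have ha : 0 < nth 0 p m <= n by move: hw; rewrite /blocking_window; lia.
by rewrite /park_step /= (first_avail_own_spotP m _ hm ha).2 //= lot_upto_succ.
Qed.

Lemma park_step_outside p m : m < n -> 0 < nth 0 p m <= n ->
  ~~ blocking_window G pi m.+1 (nth 0 p m) ->
  misparked pi (park_step G n p (Some (lot_upto m pi)) m.+1).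
Proof.
move=> hm ha hw; rewrite /park_step /=.
case e: first_avail => [x|] //=; exists x.-1.
have [hx /and3P[hx0 _ _] _] := (ohead_filter_iotaP _ _ _ _).1 e.
rewrite nth_set_nth /= eqxx; split=> //; apply/eqP => hpi.
have hidx : index m.+1 pi = x.-1 by rewrite hpi index_nth_ham_path; lia.
apply: (negP hw); apply/(first_avail_own_spotP m _ hm ha).
by rewrite hidx e; congr Some; lia.
Qed.

Lemma lot_upto0 : lot_upto 0 pi = nseq n 0.
Proof.
case: ham => hs _ hr _ _; apply: (@eq_from_nth _ 0) => [|k]; first by rewrite size_map size_nseq.
rewrite size_map hs => hk; rewrite nth_lot_upto nth_nseq hk /upto.
by have := nth_ham_path_range k hk; case: ifP; lia.
Qed.

Lemma lot_upto_full : lot_upto n pi = pi.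
Proof. by case: ham => _ _ hr _ _; apply: map_id_in => x /hr; rewrite /upto; case: ifP; lia. Qed.

Lemma park_upto p m : (forall k, k < n -> 0 < nth 0 p k <= n) -> m <= n ->
  let st := foldl (park_step G n p) (Some (nseq n 0)) (iota 1 m) in
  if parks_within G pi p m then st = Some (lot_upto m pi) else misparked pi st.
Proof.
move=> hp; elim: m => [|m IH] hm; first by rewrite /= lot_upto0.
rewrite /parks_within !iotaSr add1n add0n foldl_rcons all_rcons /=.
have := IH (ltnW hm); rewrite /parks_within; case: all => /= hst.
- rewrite andbT; case: (boolP (blocking_window _ _ _ _)) => hw; rewrite hst.
  + exact: park_step_within.
  + exact: park_step_outside (hp m hm) hw.
- by rewrite andbF; apply: park_step_misparked hst; case/andP: (hp m hm).
Qed.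

Theorem num_fpf_outcome_ham_path :
  num_fpf_outcome G n pi = \prod_(0 <= k < n) size (blocking_seq k.+1 pi G).
Proof.
have hsz : size pi = n by case: ham.
rewrite /num_fpf_outcome /prefs (eq_in_count (a2 := parks_within G pi ^~ n)).
  rewrite /parks_within (count_words n (iota 1 n) (fun k => blocking_window G pi k.+1)).
  apply: eq_big_nat => k hk; have ht : index k.+1 pi < n by apply: index_ham_path_lt; lia.
  rewrite count_iota_window // size_blocking_seq ?hsz //.
  by have := blocking_len_le G pi k.+1; lia.
move=> p /words_sizeP[hp /allP hpA].
have hrange : forall k, k < n -> 0 < nth 0 p k <= n.
  by move=> k hk; have := hpA _ (mem_nth 0 (_ : k < size p));
    rewrite hp inE mem_iota add1n ltnS => /(_ hk).
have := park_upto p n hrange (leqnn n); rewrite -fparkE lot_upto_full.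
case: parks_within => [->|]; first by rewrite eqxx.
by case: fpark => [s|] //= [k [hk0 hkpi]]; apply/eqP => -[e]; rewrite e eqxx in hkpi.
Qed.

End HamiltonianPath.

Lemma prod_nat_succ m : \prod_(0 <= k < m) k.+1 = m`!.
Proof.
elim: m => [|m IH]; first by rewrite big_geq.
by rewrite big_nat_recr // IH factS mulnC.
Qed.

Lemma prod_nat_shift a m : \prod_(a <= k < a + m) (k.+1 - a) = m`!.
Proof.
rewrite -{1}(add0n a) big_addn addKn -prod_nat_succ.
by apply: eq_big_nat => k _; lia.
Qed.

Lemma prod_fact_skip3 m : 2 <= m ->
  3 * \prod_(0 <= k < m) (if k < 2 then k.+1 else k.+2) = m.+1`!.
Proof.
elim: m => [|m IH] // hm; case: (ltnP m 2) => hm2.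
  have -> : m = 1 by lia.
  by rewrite !big_nat_recr // big_geq.
by rewrite big_nat_recr //= mulnA IH // ltnNge hm2 factS mulnC.
Qed.


Section IncreasingRotation.

Variables n i : nat.
Hypotheses (n_ge3 : 3 <= n) (i_range : 1 <= i <= n).

Lemma size_Inc : size (Inc n i) = n.
Proof. by rewrite /Inc size_cat !size_iota; lia. Qed.

Lemma nth_Inc k : nth 0 (Inc n i) k =
  if k < n.+1 - i then i + k else if k < n then k - (n.+1 - i) + 1 else 0.
Proof.
rewrite /Inc nth_cat size_iota; case: ifP => h1; first by rewrite nth_iota.
by case: ifP => h2; [rewrite nth_iota | rewrite nth_default ?size_iota]; lia.
Qed.

Lemma uniq_Inc : uniq (Inc n i).
Proof.
rewrite /Inc cat_uniq !iota_uniq andbT /=.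
by apply/hasPn => x; rewrite !mem_iota; lia.
Qed.

Lemma index_Inc j : 1 <= j <= n ->
  index j (Inc n i) = if i <= j then j - i else n.+1 - i + j.-1.
Proof.
move=> hj; set t := if i <= j then _ else _.
have ht : t < size (Inc n i) by rewrite size_Inc /t; case: ifP; lia.
have <- : nth 0 (Inc n i) t = j by rewrite nth_Inc /t; case: ifP; repeat case: ifP; lia.
by rewrite index_uniq // uniq_Inc.
Qed.

Lemma ham_path_Inc : ham_path n (cycle_adj n) (Inc n i).
Proof.
split; [exact: size_Inc | exact: uniq_Inc | | |].
- by move=> x; rewrite /Inc mem_cat !mem_iota; lia.
- by move=> j hj; rewrite /Inc mem_cat !mem_iota; lia.
- by move=> q hq; rewrite !nth_Inc /cycle_adj; repeat case: ifP; lia.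
Qed.

Lemma blocking_len_Inc j : 1 <= j <= n ->
  blocking_len (cycle_adj n) (Inc n i) j =
  if i <= j then (j - i).+1 else if 3 <= j then j.+1 else j.
Proof.
move=> hj; have := index_Inc j hj.
case: (leqP i j) => hij; [|case: (leqP 3 j) => hj3] => ht; apply: blocking_lenE; rewrite ht //=.
- by move=> d hd; apply: blocker_le; rewrite nth_Inc; repeat case: ifP; lia.
- by move=> ?; exfalso; lia.
- by lia.
- move=> d hd; case: (ltnP d j) => hdj.
    by apply: blocker_le; rewrite nth_Inc; repeat case: ifP; lia.
  (* spot of [n]: its neighbour [1 < j] is not adjacent to [j] *)
  have -> : n.+1 - i + j.-1 - d = n - i by lia.
  by rewrite /blocker /nbrs size_Inc !nth_Inc; repeat case: ifP => ? /=; rewrite ?/cycle_adj; lia.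
- move=> hr; have -> : n.+1 - i + j.-1 - j.+1 = (n - i).-1 by lia.
  by rewrite /blocker /nbrs size_Inc !nth_Inc; repeat case: ifP => ? /=; rewrite ?/cycle_adj; lia.
- by lia.
- by move=> d hd; apply: blocker_le; rewrite nth_Inc; repeat case: ifP; lia.
- move=> hr; have -> : n.+1 - i + j.-1 - j = n - i by lia.
  by rewrite /blocker /nbrs size_Inc !nth_Inc; repeat case: ifP => ? /=; rewrite ?/cycle_adj; lia.
Qed.

Lemma blocking_seq_Inc j : 1 <= j <= n ->
  blocking_seq j (Inc n i) (cycle_adj n) =
  if i <= j then iota i (j.+1 - i) else if 3 <= j then n :: iota 1 j else iota 1 j.
Proof.
move=> hj; rewrite blocking_seqE; last by rewrite size_Inc index_Inc //; case: ifP; lia.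
rewrite index_Inc // blocking_len_Inc //.
case: (leqP i j) => hij; [|case: (leqP 3 j) => hj3].
- have -> : j.+1 - i = (j - i).+1 by lia.
  by rewrite subnn; apply: map_nth_iota => k hk; rewrite nth_Inc; case: ifP; lia.
- have -> : (n.+1 - i + j.-1).+1 - j.+1 = n - i by lia.
  rewrite /= nth_Inc; congr cons; first by case: ifP; lia.
  by apply: map_nth_iota => k hk; rewrite nth_Inc; repeat case: ifP; lia.
- have -> : (n.+1 - i + j.-1).+1 - j = n.+1 - i by lia.
  by apply: map_nth_iota => k hk; rewrite nth_Inc; repeat case: ifP; lia.
Qed.

Lemma num_fpf_outcome_Inc :
  num_fpf_outcome (cycle_adj n) n (Inc n i) =
  \prod_(0 <= k < i.-1) (if k < 2 then k.+1 else k.+2) * (n.+1 - i)`!.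
Proof.
have size_B : forall k, k < n -> size (blocking_seq k.+1 (Inc n i) (cycle_adj n)) =
    if i <= k.+1 then k.+2 - i else if 2 <= k then k.+2 else k.+1.
  move=> k hk; have hk1 : 1 <= k.+1 <= n by lia.
  rewrite size_blocking_seq; last by rewrite size_Inc index_Inc //; case: ifP; lia.
  by rewrite blocking_len_Inc //; repeat case: ifP; lia.
rewrite (num_fpf_outcome_ham_path _ _ _ ham_path_Inc) (big_cat_nat _ (n := i.-1)) //=; last lia.
congr (_ * _).
- apply: eq_big_nat => k hk; rewrite size_B; last lia.
  by repeat case: ifP; lia.
- rewrite -(prod_nat_shift i.-1 (n.+1 - i)) (_ : i.-1 + _ = n); last lia.
  apply: eq_big_nat => k hk; rewrite size_B; last lia.
  by case: ifP => ?; lia.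
Qed.

End IncreasingRotation.

Theorem proposition2p9 (n i : nat) :
  3 <= n -> 1 <= i <= n ->
  (4 <= i ->
     (forall j, 1 <= j <= n ->
        blocking_seq j (Inc n i) (cycle_adj n) =
          (if i <= j then iota i (j.+1 - i)
           else if 3 <= j then n :: iota 1 j
           else if j == 2 then [:: 1; 2]
           else [:: 1])) /\
     num_fpf_outcome (cycle_adj n) n (Inc n i) = ((n - i).+1)`! * i`! %/ 3) /\
  (i <= 3 ->
     (forall j, 1 <= j <= n ->
        blocking_seq j (Inc n i) (cycle_adj n) =
          (if i <= j then iota i (j.+1 - i) else iota 1 j)) /\
     num_fpf_outcome (cycle_adj n) n (Inc n i) = (n.+1 - i)`! * (i.-1)`!).
Proof.
move=> hn hi; rewrite num_fpf_outcome_Inc //; split=> hi3; split.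
- move=> j hj; rewrite blocking_seq_Inc //; case: ifP => // hij; case: ifP => // hj3.
  by case: (j =P 2) => [-> | ne] //; have -> : j = 1 by lia.
- have -> : i`! = 3 * \prod_(0 <= k < i.-1) (if k < 2 then k.+1 else k.+2).
    by rewrite prod_fact_skip3 ?prednK //; lia.
  by rewrite mulnCA mulKn // mulnC subSn; last lia.
- move=> j hj; rewrite blocking_seq_Inc //; case: ifP => // hij.
  by have -> : (3 <= j) = false by lia.
- rewrite mulnC; congr (_ * _).
  by rewrite -prod_nat_succ; apply: eq_big_nat => k hk; have -> : k < 2 by lia.
Qed.
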